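(* For parameters $\mu\ge 0$, $0\le c\le\mu$, $\sigma\ge 0$, $\eta_s\ge 0$, $\eta_c\ge 0$, let $u_c^*$ be the optimal value of $$\max_{p_0\in\mathbb{R},\,r\in[0,1]}\; p_0+r\mu-c-\eta_c r^2\sigma^2 \quad\text{subject to}\quad (1-r)\mu-p_0-\eta_s(1-r)^2\sigma^2\ge 0,$$ and let $u_{c,r=0}^*$ be the optimal value of the same problem with $r$ fixed to $0$. Then the set $$\mathbb{T}=\{(\mu,c,\eta_s,\eta_c,\sigma):\ u_c^*\ge 0,\ u_{c,r=0}^*<0,\ \mu\ge 0,\ 0\le c\le\mu,\ \eta_s\ge 0,\ \eta_c\ge 0\}$$ is non-empty; that is, there are parameters for which trade occurs when royalties are allowed but not when they are ruled out.
   Context: Interpretation: a creator (cost $c$) sells an NFT at mint price $p_0$ with royalty rate $r$ to a speculator, who resells it at the realized end-buyer valuation $V$ with mean $\mu$ and variance $\sigma^2$; both have mean-variance utility with risk coefficients $\eta_c$ (creator) and $\eta_s$ (speculator); the constraint is the speculator's participation constraint. Trade occurs iff the creator's optimal utility is nonnegative. *)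

From Stdlib Require Import Reals.
Open Scope R_scope.

Definition creator_obj (mu c sigma eta_c p0 r : R) : R :=
  p0 + r * mu - c - eta_c * r ^ 2 * sigma ^ 2.

Definition feasible (mu sigma eta_s p0 r : R) : Prop :=
  (1 - r) * mu - p0 - eta_s * (1 - r) ^ 2 * sigma ^ 2 >= 0.

Definition values_royalty (mu c sigma eta_s eta_c : R) (v : R) : Prop :=
  exists p0 r, 0 <= r <= 1 /\ feasible mu sigma eta_s p0 r /\
               v = creator_obj mu c sigma eta_c p0 r.

Definition values_no_royalty (mu c sigma eta_s eta_c : R) (v : R) : Prop :=
  exists p0, feasible mu sigma eta_s p0 0 /\
             v = creator_obj mu c sigma eta_c p0 0.

Definition opt_value (mu c sigma eta_s eta_c u : R) : Prop :=
  is_lub (values_royalty mu c sigma eta_s eta_c) u.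

Definition opt_value_r0 (mu c sigma eta_s eta_c u : R) : Prop :=
  is_lub (values_no_royalty mu c sigma eta_s eta_c) u.

(* For a fixed royalty r the speculator's constraint binds at the optimum, so the creator
   earns mu - c - (eta_s (1-r)^2 + eta_c r^2) sigma^2: royalties split the resale risk
   between the two parties. Minimising over r lowers the risk cost from eta_s sigma^2
   (at r = 0) to eta_s eta_c / (eta_s + eta_c) sigma^2, so when mu - c lies between the
   two costs trade happens only with royalties. *)
From Stdlib Require Import Reals Lra.
Open Scope R_scope.

Definition max_price (mu sigma eta_s r : R) : R :=
  (1 - r) * mu - eta_s * (1 - r) ^ 2 * sigma ^ 2.

Definition risk_weight (eta_s eta_c r : R) : R :=
  eta_s * (1 - r) ^ 2 + eta_c * r ^ 2.

Lemma feasible_max_price (mu sigma eta_s p0 r : R) :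
  feasible mu sigma eta_s p0 r <-> p0 <= max_price mu sigma eta_s r.
Proof. unfold feasible, max_price; lra. Qed.

Lemma creator_obj_max_price (mu c sigma eta_s eta_c r : R) :
  creator_obj mu c sigma eta_c (max_price mu sigma eta_s r) r =
  mu - c - risk_weight eta_s eta_c r * sigma ^ 2.
Proof. unfold creator_obj, max_price, risk_weight; ring. Qed.

Lemma creator_obj_le_max_price (mu c sigma eta_s eta_c p0 r : R) :
  feasible mu sigma eta_s p0 r ->
  creator_obj mu c sigma eta_c p0 r <= mu - c - risk_weight eta_s eta_c r * sigma ^ 2.
Proof.
  intros Hf; apply feasible_max_price in Hf.
  rewrite <- (creator_obj_max_price mu c sigma eta_s eta_c r).
  unfold creator_obj; lra.
Qed.

(* (a + b) (a (1-r)^2 + b r^2) - a b = (a (1-r) - b r)^2. *)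
Lemma risk_weight_ge (eta_s eta_c r : R) :
  0 < eta_s + eta_c -> eta_s * eta_c / (eta_s + eta_c) <= risk_weight eta_s eta_c r.
Proof.
  intros Hpos.
  apply Rmult_le_reg_l with (eta_s + eta_c); [exact Hpos |].
  replace ((eta_s + eta_c) * (eta_s * eta_c / (eta_s + eta_c))) with (eta_s * eta_c)
    by (field; lra).
  assert (Hsq : 0 <= (eta_s * (1 - r) - eta_c * r) ^ 2) by apply pow2_ge_0.
  unfold risk_weight; nra.
Qed.

Lemma risk_weight_at_opt (eta_s eta_c : R) :
  0 < eta_s + eta_c ->
  risk_weight eta_s eta_c (eta_s / (eta_s + eta_c)) = eta_s * eta_c / (eta_s + eta_c).
Proof. intros Hpos; unfold risk_weight; field; lra. Qed.

Lemma is_lub_attained (E : R -> Prop) (u : R) :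
  (forall v, E v -> v <= u) -> E u -> is_lub E u.
Proof. intros Hub Hu; split; [exact Hub | intros b Hb; exact (Hb u Hu)]. Qed.

Lemma opt_value_closed_form (mu c sigma eta_s eta_c : R) :
  0 <= eta_s -> 0 <= eta_c -> 0 < eta_s + eta_c ->
  opt_value mu c sigma eta_s eta_c
    (mu - c - eta_s * eta_c / (eta_s + eta_c) * sigma ^ 2).
Proof.
  intros Hs Hc Hpos; apply is_lub_attained.
  - intros v (p0 & r & _ & Hf & ->).
    apply Rle_trans with (1 := creator_obj_le_max_price mu c sigma eta_s eta_c p0 r Hf).
    assert (Hw := risk_weight_ge eta_s eta_c r Hpos).
    assert (Hsig := pow2_ge_0 sigma).
    nra.
  - set (r := eta_s / (eta_s + eta_c)).
    exists (max_price mu sigma eta_s r), r.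
    split; [| split].
    + assert (Hr : r * (eta_s + eta_c) = eta_s) by (unfold r; field; lra).
      split; nra.
    + apply feasible_max_price, Rle_refl.
    + rewrite creator_obj_max_price; unfold r; rewrite risk_weight_at_opt; lra.
Qed.

Lemma opt_value_r0_closed_form (mu c sigma eta_s eta_c : R) :
  opt_value_r0 mu c sigma eta_s eta_c (mu - c - eta_s * sigma ^ 2).
Proof.
  assert (Hw0 : risk_weight eta_s eta_c 0 = eta_s) by (unfold risk_weight; ring).
  apply is_lub_attained.
  - intros v (p0 & Hf & ->).
    rewrite <- Hw0; apply creator_obj_le_max_price, Hf.
  - exists (max_price mu sigma eta_s 0); split.
    + apply feasible_max_price, Rle_refl.
    + rewrite creator_obj_max_price, Hw0; reflexivity.
Qed.

Theorem corollary3 :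
  exists mu c eta_s eta_c sigma u_star u_star0 : R,
    0 <= mu /\ 0 <= c <= mu /\ 0 <= sigma /\ 0 <= eta_s /\ 0 <= eta_c /\
    opt_value mu c sigma eta_s eta_c u_star /\
    opt_value_r0 mu c sigma eta_s eta_c u_star0 /\
    u_star >= 0 /\ u_star0 < 0.
Proof.
  exists 1, (2 / 5), 1, 1, 1,
    (1 - 2 / 5 - 1 * 1 / (1 + 1) * 1 ^ 2), (1 - 2 / 5 - 1 * 1 ^ 2).
  repeat (split; [lra |]).
  split; [apply opt_value_closed_form; lra |].
  split; [apply opt_value_r0_closed_form | lra].
Qed.
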